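(* Let $G\in\mathfrak{M}$, $\phi=\phi_G$, and let $\phi^c(x)=\inf_{y\in\mathbb{R}^2}(c(x,y)-\phi(y))$, $x\in\mathbb{R}^2$. Then $\phi$ and $\phi^c$ take values in $[-\infty,0]$, $\phi^c\le\phi$, and $$G=\{y\in\mathbb{R}^2:\phi(y)=0\}=\{x\in\mathbb{R}^2:\phi^c(x)=0\}.$$
   Context: $c(x,y)=(x_1-y_1)(x_2-y_2)$ for $x,y\in\mathbb{R}^2$. $\mathfrak{M}$: family of maximal monotone sets $G\subset\mathbb{R}^2$ (monotone: $c(r,s)\ge0$ for all $r,s\in G$; maximal: not a proper subset of a monotone set). $\phi_G(y)=\inf_{x\in G}c(x,y)$. *)

From HB Require Import structures.
From mathcomp Require Import all_boot all_order all_algebra.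
From mathcomp Require Import all_classical all_reals ereal.
Set Implicit Arguments. Unset Strict Implicit. Unset Printing Implicit Defensive.
Import Order.TTheory GRing.Theory Num.Theory.
Local Open Scope classical_set_scope.
Local Open Scope ring_scope.

Definition cost (R : realType) (x y : R * R) : R := (x.1 - y.1) * (x.2 - y.2).

Definition monotone_set (R : realType) (G : set (R * R)) : Prop :=
  forall r s, G r -> G s -> 0 <= cost r s.

Definition maximal_monotone (R : realType) (G : set (R * R)) : Prop :=
  monotone_set G /\ (forall H : set (R * R), monotone_set H -> G `<=` H -> H = G).

Definition phiG (R : realType) (G : set (R * R)) (y : R * R) : \bar R :=
  ereal_inf [set (cost x y)%:E | x in G].

Definition phiG_c (R : realType) (G : set (R * R)) (x : R * R) : \bar R :=
  ereal_inf [set ((cost x y)%:E - phiG G y)%E | y in [set: R * R]].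

From mathcomp Require Import all_boot all_order all_algebra.
From mathcomp Require Import all_classical all_reals ereal.
From mathcomp Require Import lra.
Set Implicit Arguments. Unset Strict Implicit. Unset Printing Implicit Defensive.
Import Order.TTheory GRing.Theory Num.Theory.
Local Open Scope classical_set_scope.
Local Open Scope ring_scope.

(* On G, phi = 0 by monotonicity (the infimum is attained at x = y). Off G,
   maximality forbids adjoining y, so some x in G has c(x, y) < 0 and phi(y) < 0.
   Choosing y in G in the definition of phi^c gives phi^c <= phi, and for x in G
   every term c(x, y) - phi(y) is nonnegative since phi(y) <= c(x, y). *)

Lemma costC (R : realType) (x y : R * R) : cost x y = cost y x.
Proof. rewrite /cost; lra. Qed.

Lemma costxx (R : realType) (x : R * R) : cost x x = 0.
Proof. by rewrite /cost subrr mul0r. Qed.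

Lemma maximal_monotone_notin (R : realType) (G : set (R * R)) (y : R * R) :
  maximal_monotone G -> ~ G y -> exists2 x, G x & cost x y < 0.
Proof.
move=> [monoG maxG] Gy'; apply: contrapT => no_neg.
have cost_ge0 x : G x -> 0 <= cost x y.
  by move=> Gx; rewrite leNgt; apply/negP => neg; apply: no_neg; exists x.
have monoGy : monotone_set (G `|` [set y]).
  move=> r s [Gr|->] [Gs|->]; rewrite ?costxx //; first exact: monoG.
  - exact: cost_ge0.
  - by rewrite costC; apply: cost_ge0.
by apply: Gy'; rewrite -(maxG _ monoGy (@subsetUl _ G [set y])); right.
Qed.

Section PhiG.
Variables (R : realType) (G : set (R * R)).

Lemma phiG_le_cost x y : G x -> (phiG G y <= (cost x y)%:E)%E.
Proof. by move=> Gx; apply: ereal_inf_lbound; exists x. Qed.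

Lemma phiG_eq0 y : monotone_set G -> G y -> phiG G y = 0%E.
Proof.
move=> monoG Gy; apply/eqP; rewrite eq_le; apply/andP; split.
  by have := phiG_le_cost y Gy; rewrite costxx.
by apply/ereal_infP => _ [x Gx <-]; rewrite lee_fin; apply: monoG.
Qed.

Lemma phiG_c_le_phiG x : monotone_set G -> (phiG_c G x <= phiG G x)%E.
Proof.
move=> monoG; apply/ereal_infP => _ [y Gy <-].
apply: ereal_inf_lbound; exists y => //.
by rewrite (phiG_eq0 monoG Gy) sube0 costC.
Qed.

Lemma phiG_c_ge0 x : G x -> (0 <= phiG_c G x)%E.
Proof.
move=> Gx; apply/ereal_infP => _ [y _ <-].
by rewrite sube_ge0 ?orbT // phiG_le_cost.
Qed.

Hypothesis maxG : maximal_monotone G.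

Lemma phiG_lt0 y : ~ G y -> (phiG G y < 0)%E.
Proof.
move=> Gy'; have [x Gx neg] := maximal_monotone_notin maxG Gy'.
by apply: le_lt_trans (phiG_le_cost y Gx) _; rewrite lte_fin.
Qed.

Lemma phiG_le0 y : (phiG G y <= 0)%E.
Proof.
have [Gy|Gy'] := pselect (G y); first by rewrite phiG_eq0 //; case: maxG.
exact/ltW/phiG_lt0.
Qed.

Lemma phiG_c_le0 x : (phiG_c G x <= 0)%E.
Proof. by apply: le_trans (phiG_le0 x); apply: phiG_c_le_phiG; case: maxG. Qed.

Lemma phiG_eq0E : G = [set y | phiG G y = 0%E].
Proof.
apply/seteqP; split=> y /=; first by apply: phiG_eq0; case: maxG.
by move=> phi0; apply: contrapT => /phiG_lt0; rewrite phi0 ltxx.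
Qed.

Lemma phiG_c_eq0E : G = [set x | phiG_c G x = 0%E].
Proof.
have monoG : monotone_set G by case: maxG.
apply/seteqP; split=> x /=.
  by move=> Gx; apply/eqP; rewrite eq_le phiG_c_ge0 // phiG_c_le0.
move=> phic0; apply: contrapT => Gx'.
by have := le_lt_trans (phiG_c_le_phiG x monoG) (phiG_lt0 Gx'); rewrite phic0 ltxx.
Qed.

End PhiG.

Theorem lemma16 (R : realType) (G : set (R * R)) :
  maximal_monotone G ->
  (forall y, (phiG G y <= 0)%E) /\ (forall x, (phiG_c G x <= 0)%E) /\
  (forall x, (phiG_c G x <= phiG G x)%E) /\
  G = [set y | phiG G y = 0%E] /\ G = [set x | phiG_c G x = 0%E].
Proof.
move=> maxG; have monoG : monotone_set G by case: maxG.
split; first exact: phiG_le0.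
split; first exact: phiG_c_le0.
split; first by move=> x; apply: phiG_c_le_phiG.
by split; [apply: phiG_eq0E | apply: phiG_c_eq0E].
Qed.
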